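(* Let $T$ be a strongly consistent $\mathcal{L}$-theory in $RGL^*$. Then $T$ is maximally strongly consistent if and only if (1) for all $\mathcal{L}$-sentences $\varphi,\psi$, either $\varphi\to\psi\in T$ or $\psi\to\varphi\in T$; and (2) whenever $\varphi$ is an $\mathcal{L}$-sentence with $T\vdash\bar r\to\varphi$ for all rationals $r\in(0,1]$, then $\varphi\in T$.
   Context: $\mathcal{L}$ is a first-order language with countably many predicate, function and constant symbols. Formulas of $RGL^*$ are built from atomic formulas and the nullary connectives $\bar r$ ($r\in[0,1]\cap\mathbb{Q}$, including $\bar0,\bar1$) by $\wedge,\to,\forall,\exists$; $\neg\varphi:=\varphi\to\bar1$, $\varphi\vee\psi:=((\varphi\to\psi)\to\psi)\wedge((\psi\to\varphi)\to\varphi)$, $\varphi\leftrightarrow\psi:=(\varphi\to\psi)\wedge(\psi\to\varphi)$. Proof system $\vdash$: all instances of (G1) $(\varphi\to\psi)\to((\psi\to\chi)\to(\varphi\to\chi))$; (G2) $(\varphi\wedge\psi)\to\varphi$; (G3) $(\varphi\wedge\psi)\to(\psi\wedge\varphi)$; (G4) $\varphi\to(\varphi\wedge\varphi)$; (G5) $(\varphi\to(\psi\to\chi))\leftrightarrow((\varphi\wedge\psi)\to\chi)$; (G6) $((\varphi\to\psi)\to\chi)\to(((\psi\to\varphi)\to\chi)\to\chi)$; (G7) $\bar1\to\varphi$; (G$\forall$1) $(\forall x\,\varphi(x))\to\varphi(t)$; (G$\forall$2) $\forall x(\psi\to\varphi(x))\to(\psi\to\forall x\,\varphi(x))$; (G$\forall$3)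 $\forall x(\psi\vee\varphi(x))\to(\psi\vee\forall x\,\varphi(x))$; (G$\exists$1) $\varphi(t)\to\exists x\,\varphi(x)$; (G$\exists$2) $\exists x(\psi\to\varphi(x))\to(\psi\to\exists x\,\varphi(x))$ (with $t$ substitutable for $x$ and $x$ not free in $\psi$); (RGL1) $(\bar r\wedge\bar s)\leftrightarrow\overline{\max\{r,s\}}$; (RGL2) $\bar r\to\bar s$ if $r\ge s$, $(\bar r\to\bar s)\leftrightarrow\bar s$ if $r<s$; (RGL3) $\neg\neg\bar r$ for $r<1$. Rules: modus ponens and generalization. A theory $T$ is strongly consistent if $T\nvdash\bar r$ for every rational $r\in(0,1]$; it is maximally strongly consistent if it is strongly consistent and every strongly consistent $\mathcal{L}$-theory $\Sigma\supseteq T$ equals $T$. *)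

From mathcomp Require Import all_boot all_order all_algebra.
Set Implicit Arguments. Unset Strict Implicit. Unset Printing Implicit Defensive.
Import Order.TTheory GRing.Theory Num.Theory.
Local Open Scope ring_scope.

(* A countable first-order language: countably many function symbols
   (constants = 0-ary function symbols) and predicate symbols, with arities. *)
Record signature := Signature {
  Fsym : countType;
  Psym : countType;
  far : Fsym -> nat;
  par : Psym -> nat }.

Definition qI := {r : rat | (0 <= r) && (r <= 1)}.
Definition qval (r : qI) : rat := sval r.

Section Syntax.
Variable L : signature.

Inductive lterm : Type :=
| var : nat -> lterm
| app : forall f : Fsym L, ('I_(far f) -> lterm) -> lterm.

Inductive formula : Type :=
| Atom : forall p : Psym L, ('I_(par p) -> lterm) -> formula
| Const : qI -> formula
| And : formula -> formula -> formula
| Imp : formula -> formula -> formula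
| All : formula -> formula                 (* binds de Bruijn index 0 *)
| Ex : formula -> formula.

Definition Neg (phi : formula) : formula := Imp phi (Const (exist _ 1 isT)).
Definition Or (phi psi : formula) : formula :=
  And (Imp (Imp phi psi) psi) (Imp (Imp psi phi) phi).
Definition Iff (phi psi : formula) : formula := And (Imp phi psi) (Imp psi phi).

Fixpoint ren_term (xi : nat -> nat) (t : lterm) : lterm :=
  match t with
  | var n => var (xi n)
  | app f a => app (fun i => ren_term xi (a i))
  end.

Fixpoint subst_term (sigma : nat -> lterm) (t : lterm) : lterm :=
  match t with
  | var n => sigma n
  | app f a => app (fun i => subst_term sigma (a i))
  end.

Definition upren (xi : nat -> nat) (n : nat) : nat :=
  match n with 0 => 0 | k.+1 => (xi k).+1 end.

Definition up (sigma : nat -> lterm) (n : nat) : lterm :=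
  match n with 0 => var 0 | k.+1 => ren_term succn (sigma k) end.

Fixpoint ren_form (xi : nat -> nat) (phi : formula) : formula :=
  match phi with
  | Atom p a => Atom (fun i => ren_term xi (a i))
  | Const r => Const r
  | And a b => And (ren_form xi a) (ren_form xi b)
  | Imp a b => Imp (ren_form xi a) (ren_form xi b)
  | All a => All (ren_form (upren xi) a)
  | Ex a => Ex (ren_form (upren xi) a)
  end.

Fixpoint subst_form (sigma : nat -> lterm) (phi : formula) : formula :=
  match phi with
  | Atom p a => Atom (fun i => subst_term sigma (a i))
  | Const r => Const r
  | And a b => And (subst_form sigma a) (subst_form sigma b)
  | Imp a b => Imp (subst_form sigma a) (subst_form sigma b)
  | All a => All (subst_form (up sigma) a)
  | Ex a => Ex (subst_form (up sigma) a)
  end.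

(* phi(t): substitute t for the variable bound by the outer quantifier *)
Definition inst (t : lterm) (n : nat) : lterm :=
  match n with 0 => t | k.+1 => var k end.
Definition instantiate (phi : formula) (t : lterm) : formula := subst_form (inst t) phi.

(* lifting psi under a binder: expresses "x not free in psi" *)
Definition lift (psi : formula) : formula := ren_form succn psi.

Fixpoint term_bound (n : nat) (t : lterm) : Prop :=
  match t with
  | var k => (k < n)%N
  | app f a => forall i, term_bound n (a i)
  end.

Fixpoint form_bound (n : nat) (phi : formula) : Prop :=
  match phi with
  | Atom p a => forall i, term_bound n (a i)
  | Const _ => True
  | And a b => form_bound n a /\ form_bound n b
  | Imp a b => form_bound n a /\ form_bound n b
  | All a => form_bound n.+1 a
  | Ex a => form_bound n.+1 a
  end.

Definition sentence (phi : formula) : Prop := form_bound 0 phi.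

Definition is_theory (T : formula -> Prop) : Prop := forall phi, T phi -> sentence phi.

Inductive axiom : formula -> Prop :=
| G1 a b c : axiom (Imp (Imp a b) (Imp (Imp b c) (Imp a c)))
| G2 a b : axiom (Imp (And a b) a)
| G3 a b : axiom (Imp (And a b) (And b a))
| G4 a : axiom (Imp a (And a a))
| G5 a b c : axiom (Iff (Imp a (Imp b c)) (Imp (And a b) c))
| G6 a b c : axiom (Imp (Imp (Imp a b) c) (Imp (Imp (Imp b a) c) c))
| G7 a : axiom (Imp (Const (exist _ 1 isT)) a)
| GAll1 phi t : axiom (Imp (All phi) (instantiate phi t))
| GAll2 psi phi : axiom (Imp (All (Imp (lift psi) phi)) (Imp psi (All phi)))
| GAll3 psi phi : axiom (Imp (All (Or (lift psi) phi)) (Or psi (All phi)))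
| GEx1 phi t : axiom (Imp (instantiate phi t) (Ex phi))
| GEx2 psi phi : axiom (Imp (Ex (Imp (lift psi) phi)) (Imp psi (Ex phi)))
| RGL1 (r s m : qI) : qval m = Num.max (qval r) (qval s) ->
    axiom (Iff (And (Const r) (Const s)) (Const m))
| RGL2a (r s : qI) : qval s <= qval r -> axiom (Imp (Const r) (Const s))
| RGL2b (r s : qI) : qval r < qval s ->
    axiom (Iff (Imp (Const r) (Const s)) (Const s))
| RGL3 (r : qI) : qval r < 1 -> axiom (Neg (Neg (Const r))).

Inductive prv (T : formula -> Prop) : formula -> Prop :=
| prv_ax phi : axiom phi -> prv T phi
| prv_hyp phi : T phi -> prv T phi
| prv_mp phi psi : prv T phi -> prv T (Imp phi psi) -> prv T psi
| prv_gen phi : prv T phi -> prv T (All phi).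

Definition strongly_consistent (T : formula -> Prop) : Prop :=
  forall r : qI, 0 < qval r -> ~ prv T (Const r).

Definition maximally_strongly_consistent (T : formula -> Prop) : Prop :=
  strongly_consistent T /\
  forall Sg : formula -> Prop, is_theory Sg -> (forall phi, T phi -> Sg phi) ->
    strongly_consistent Sg -> forall phi, Sg phi <-> T phi.

End Syntax.

From Pilot Require Import Defs.
From Stdlib Require Import Classical FunctionalExtensionality.
From mathcomp Require Import all_boot all_order all_algebra.
From mathcomp Require Import lra.
Import Order.TTheory GRing.Theory Num.Theory.
Set Implicit Arguments.
Unset Strict Implicit.
Unset Printing Implicit Defensive.
Local Open Scope ring_scope.

(* Maximality says that a sentence chi lies in T as soon as T + chi is still
   strongly consistent, and by the deduction theorem for sentences T + chi is
   strongly inconsistent exactly when T |- chi -> r for some rational r > 0.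
   If neither phi -> psi nor psi -> phi were in T, both would imply some
   positive constant, and prelinearity (G6) would derive that constant from T.
   If T |- r -> phi for every r > 0 while phi -> s is derivable, then taking
   r = s/2 gives T |- s/2 -> s, hence T |- s by RGL2b.  Conversely, if phi lies
   in a strongly consistent extension of T, condition (1) applied to r and phi
   can only yield r -> phi in T, for phi -> r in T would derive r in the
   extension; so phi is in T by (2). *)

Lemma ren_term_id (L : signature) (t : lterm L) n (xi : nat -> nat) :
  term_bound n t -> (forall k, (k < n)%N -> xi k = k) -> ren_term xi t = t.
Proof.
elim: t => [k|f a IH] /= tb xiE; first by rewrite xiE.
by congr app; apply: functional_extensionality => i; apply: IH.
Qed.

Lemma ren_form_id (L : signature) (phi : formula L) n (xi : nat -> nat) :
  form_bound n phi -> (forall k, (k < n)%N -> xi k = k) -> ren_form xi phi = phi.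
Proof.
have upren_id m (zeta : nat -> nat) : (forall k, (k < m)%N -> zeta k = k) ->
    forall k, (k < m.+1)%N -> upren zeta k = k.
  by move=> zetaE [|k] //= kb; rewrite zetaE.
elim: phi n xi => [p a|r|a IHa b IHb|a IHa b IHb|a IHa|a IHa] n xi /=.
- move=> ab xiE; congr Atom; apply: functional_extensionality => i.
  exact: ren_term_id (ab i) xiE.
- by [].
- by case=> ab bb xiE; rewrite (IHa n) // (IHb n).
- by case=> ab bb xiE; rewrite (IHa n) // (IHb n).
- by move=> ab xiE; rewrite (IHa n.+1) //; apply: upren_id.
- by move=> ab xiE; rewrite (IHa n.+1) //; apply: upren_id.
Qed.

Lemma lift_sentence (L : signature) (phi : formula L) :
  sentence phi -> Defs.lift phi = phi.
Proof. by move=> phi_s; apply: (@ren_form_id L phi 0 succn). Qed.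

Section DerivedRules.
Variables (L : signature) (T : formula L -> Prop).

Lemma prv_imp_trans a b c :
  prv T (Imp a b) -> prv T (Imp b c) -> prv T (Imp a c).
Proof.
move=> ab bc; apply: prv_mp bc _; apply: prv_mp ab _; apply: prv_ax; exact: G1.
Qed.

Lemma prv_iffl a b : prv T (Iff a b) -> prv T (Imp a b).
Proof. by move=> ab; apply: prv_mp ab _; apply: prv_ax; apply: G2. Qed.

Lemma prv_iffr a b : prv T (Iff a b) -> prv T (Imp b a).
Proof.
move=> ab; apply: prv_iffl; apply: prv_mp ab _; apply: prv_ax; exact: G3.
Qed.

Lemma prv_curry a b c : prv T (Imp (And a b) c) -> prv T (Imp a (Imp b c)).
Proof. by move=> abc; apply: prv_mp abc _; apply: prv_iffr; apply: prv_ax; apply: G5. Qed.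

Lemma prv_uncurry a b c : prv T (Imp a (Imp b c)) -> prv T (Imp (And a b) c).
Proof. by move=> abc; apply: prv_mp abc _; apply: prv_iffl; apply: prv_ax; apply: G5. Qed.

Lemma prv_weaken a b : prv T a -> prv T (Imp b a).
Proof. by move=> pa; apply: prv_mp pa _; apply: prv_curry; apply: prv_ax; apply: G2. Qed.

Lemma prv_imp_refl a : prv T (Imp a a).
Proof. by apply: (@prv_imp_trans _ (And a a)); apply: prv_ax; [apply: G4 | apply: G2]. Qed.

Lemma prv_imp_swap a b c : prv T (Imp a (Imp b c)) -> prv T (Imp b (Imp a c)).
Proof.
move=> abc; apply: prv_curry; apply: (@prv_imp_trans _ (And a b)).
  by apply: prv_ax; apply: G3.
exact: prv_uncurry.
Qed.

Lemma prv_imp_contract a c : prv T (Imp a (Imp a c)) -> prv T (Imp a c).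
Proof.
move=> aac; apply: (@prv_imp_trans _ (And a a)); first by apply: prv_ax; apply: G4.
exact: prv_uncurry.
Qed.

Lemma prv_mp_under x a b :
  prv T (Imp x a) -> prv T (Imp x (Imp a b)) -> prv T (Imp x b).
Proof.
by move=> xa xab; apply: prv_imp_contract; apply: prv_imp_trans xa (prv_imp_swap xab).
Qed.

Lemma prv_imp_const_le a (r s : qI) :
  qval s <= qval r -> prv T (Imp a (Const L r)) -> prv T (Imp a (Const L s)).
Proof. by move=> sr ar; apply: prv_imp_trans ar (prv_ax _ (RGL2a _ sr)). Qed.

Lemma prv_const_of_imp_lt (h s : qI) :
  qval h < qval s -> prv T (Imp (Const L h) (Const L s)) -> prv T (Const L s).
Proof.
by move=> hs hs_imp; apply: prv_mp hs_imp _; apply: prv_iffl; apply: prv_ax; apply: RGL2b.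
Qed.

Lemma prv_prelinear_const phi psi (r : qI) :
  prv T (Imp (Imp phi psi) (Const L r)) ->
  prv T (Imp (Imp psi phi) (Const L r)) -> prv T (Const L r).
Proof.
move=> pr qr; apply: prv_mp qr _; apply: prv_mp pr _; apply: prv_ax; exact: G6.
Qed.

End DerivedRules.

Definition add_axiom (L : signature) (T : formula L -> Prop) (chi : formula L) :
  formula L -> Prop := fun x => T x \/ x = chi.

Lemma deduction_sentence (L : signature) (T : formula L -> Prop) chi th :
  sentence chi -> prv (add_axiom T chi) th -> prv T (Imp chi th).
Proof.
move=> chi_s; elim=> {th} [a ax|a [Ta|->]|a b _ ca _ cab|a _ ca].
- exact/prv_weaken/prv_ax.
- exact/prv_weaken/prv_hyp.
- exact: prv_imp_refl.
- exact: prv_mp_under ca cab.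
- apply: prv_mp (prv_gen ca) _; rewrite -{1}(lift_sentence chi_s).
  by apply: prv_ax; apply: GAll2.
Qed.

Lemma add_axiom_inconsistent (L : signature) (T : formula L -> Prop) chi :
  sentence chi -> ~ strongly_consistent (add_axiom T chi) ->
  exists2 r : qI, 0 < qval r & prv T (Imp chi (Const L r)).
Proof.
move=> chi_s inconsistent; apply: NNPP => no_r; apply: inconsistent => r r_gt0.
by move=> /(deduction_sentence chi_s) pr; apply: no_r; exists r.
Qed.

Lemma qI_below (s : qI) : 0 < qval s -> exists2 h : qI, 0 < qval h & qval h < qval s.
Proof.
case: s => s /= /andP[s_ge0 s_le1]; rewrite /qval /= => s_gt0.
have h01 : (0 <= s / 2) && (s / 2 <= 1) by apply/andP; split; lra.
by exists (exist _ (s / 2) h01); rewrite /qval /=; lra.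
Qed.

Section MaximalTheory.
Variables (L : signature) (T : formula L -> Prop).
Hypotheses (T_theory : is_theory T) (T_msc : maximally_strongly_consistent T).

Let T_sc : strongly_consistent T := proj1 T_msc.

Lemma msc_add_axiom chi :
  sentence chi -> strongly_consistent (add_axiom T chi) -> T chi.
Proof.
move=> chi_s sc; apply: (proj1 (proj2 T_msc _ _ _ sc chi)); last by right.
- by move=> x [/T_theory|->].
- by move=> x Tx; left.
Qed.

Lemma msc_prelinear phi psi : sentence phi -> sentence psi ->
  T (Imp phi psi) \/ T (Imp psi phi).
Proof.
move=> phi_s psi_s; apply: NNPP => /not_or_and[nTpq nTqp].
have pq_s : sentence (Imp phi psi) by split.
have qp_s : sentence (Imp psi phi) by split.
have [r r_gt0 pq_r] :=
  add_axiom_inconsistent pq_s (fun sc => nTpq (msc_add_axiom pq_s sc)).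
have [s s_gt0 qp_r] :=
  add_axiom_inconsistent qp_s (fun sc => nTqp (msc_add_axiom qp_s sc)).
case: (lerP (qval r) (qval s)) => [rs|sr].
- exact/(T_sc r_gt0)/(prv_prelinear_const pq_r)/(prv_imp_const_le rs qp_r).
- exact/(T_sc s_gt0)/(prv_prelinear_const (prv_imp_const_le (ltW sr) pq_r) qp_r).
Qed.

Lemma msc_const_closed phi : sentence phi ->
  (forall r : qI, 0 < qval r -> prv T (Imp (Const L r) phi)) -> T phi.
Proof.
move=> phi_s r_phi; apply: msc_add_axiom => // s s_gt0.
move=> /(deduction_sentence phi_s) phi_s_prv.
have [h h_gt0 hs] := qI_below s_gt0.
exact/(T_sc s_gt0)/(prv_const_of_imp_lt hs)/(prv_imp_trans (r_phi h h_gt0)).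
Qed.

End MaximalTheory.

Lemma prelinear_const_closed_msc (L : signature) (T : formula L -> Prop) :
  strongly_consistent T ->
  (forall phi psi : formula L, sentence phi -> sentence psi ->
     T (Imp phi psi) \/ T (Imp psi phi)) ->
  (forall phi : formula L, sentence phi ->
     (forall r : qI, 0 < qval r -> prv T (Imp (Const L r) phi)) -> T phi) ->
  maximally_strongly_consistent T.
Proof.
move=> T_sc prelin closed; split=> // Sg Sg_theory TSg Sg_sc phi.
split=> [Sg_phi|/TSg//]; apply: closed => [|r r_gt0]; first exact: Sg_theory.
have [T_r_phi|T_phi_r] := prelin (Const L r) phi I (Sg_theory _ Sg_phi).
  exact: prv_hyp.
case: (Sg_sc r r_gt0); apply: (prv_mp (prv_hyp Sg_phi)).
exact: prv_hyp (TSg _ T_phi_r).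
Qed.

Theorem mainTheorem7 (L : signature) (T : formula L -> Prop) :
  is_theory T -> strongly_consistent T ->
  (maximally_strongly_consistent T <->
   ((forall phi psi : formula L, sentence phi -> sentence psi ->
       T (Imp phi psi) \/ T (Imp psi phi)) /\
    (forall phi : formula L, sentence phi ->
       (forall r : qI, 0 < qval r -> prv T (Imp (Const L r) phi)) -> T phi))).
Proof.
move=> T_theory T_sc; split=> [T_msc|[]]; last exact: prelinear_const_closed_msc.
by split; [apply: msc_prelinear | apply: msc_const_closed].
Qed.
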